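(* Let $K\in\{\mathbb R,\mathbb C,\mathbb H\}$ and let $(E,d)$ be a metric vector space over $K$ such that $d$ is $C_0$-translation invariant and $(C_1,C_2,C_3)$-lipschitz multiplicative. Let $d_0(x,y)=\int_{\mathbb U}d(ux,uy)\,d\mu(u)$, $\delta_0(x,y)=\lim_{n\to\infty}\frac1n d_0(nx,ny)$, let $E_0$ be the maximal linear subspace of $E$ on which $d$ is bounded, let $\|\bar x\|=\delta_0(x,0)$ for $\bar x=x+E_0\in E/E_0$, and let $D$, $D_0$ be the Hausdorff distances for $d$, $d_0$ between classes modulo $E_0$. Then the norm $\|\cdot\|$ is $(C_1,C_2+C_3)$-lipschitz equivalent to $D_0$ and $(C_1^2,C_2')$-lipschitz equivalent to $D$, where $C_2'=C_1C_2+C_1C_3+C_2$.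
   Context: A metric vector space is a topological vector space over $K$ whose topology is generated by the metric $d$. $\mathbb U=\{u\in K:|u|=1\}$, $\mu$ the right-invariant Haar probability measure on $\mathbb U$. $d$ is $C_0$-translation invariant if $d(x+z,y+z)\le d(x,y)+C_0$ for all $x,y,z$. $(C_1,C_2,C_3)$-lipschitz multiplicative ($C_1\ge1$, $C_2,C_3\ge0$) means $C_1^{-1}|\lambda|d(x,y)-C_2|\lambda|-C_3\le d(\lambda x,\lambda y)\le C_1|\lambda|d(x,y)+C_2|\lambda|+C_3$ for all $\lambda\in K$, $x,y\in E$. Hausdorff distance between classes for a distance $\rho$: $\max\big(\inf_{x\in x_0+E_0}\sup_{y\in y_0+E_0}\rho(x,y),\ \inf_{y\in y_0+E_0}\sup_{x\in x_0+E_0}\rho(x,y)\big)$. A distance $\rho$ is $(A,B)$-lipschitz equivalent to $\sigma$ if $A^{-1}\sigma-B\le\rho\le A\sigma+B$ pointwise; here the norm is viewed as the distance $(\bar x,\bar y)\mapsto\|\bar x-\bar y\|$. (Under these hypotheses $\delta_0$ exists and $\|\cdot\|$ is a well-defined norm.) *)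

From HB Require Import structures.
From mathcomp Require Import all_boot all_order all_algebra.
From mathcomp Require Import all_classical all_reals all_analysis.
Set Implicit Arguments. Unset Strict Implicit. Unset Printing Implicit Defensive.
Import Order.TTheory GRing.Theory Num.Theory.
Import numFieldNormedType.Exports.
Local Open Scope classical_set_scope.
Local Open Scope ring_scope.

(* A quaternion a + b i + c j + e k is stored as ((a, b), (c, e)) in R^4, which
   carries the (Borel) product measurable structure. *)
Definition quat (R : realType) := ((R * R) * (R * R))%type.

Definition qmul {R : realType} (p q : quat R) : quat R :=
  let: ((a1, b1), (c1, e1)) := p in
  let: ((a2, b2), (c2, e2)) := q in
  ((a1 * a2 - b1 * b2 - c1 * c2 - e1 * e2,
    a1 * b2 + b1 * a2 + c1 * e2 - e1 * c2),
   (a1 * c2 - b1 * e2 + c1 * a2 + e1 * b2,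
    a1 * e2 + b1 * c2 - c1 * b2 + e1 * a2)).

Definition qadd {R : realType} (p q : quat R) : quat R :=
  let: ((a1, b1), (c1, e1)) := p in
  let: ((a2, b2), (c2, e2)) := q in
  ((a1 + a2, b1 + b2), (c1 + c2, e1 + e2)).

Definition qsub {R : realType} (p q : quat R) : quat R :=
  let: ((a1, b1), (c1, e1)) := p in
  let: ((a2, b2), (c2, e2)) := q in
  ((a1 - a2, b1 - b2), (c1 - c2, e1 - e2)).

Definition qone {R : realType} : quat R := ((1, 0), (0, 0)).

Definition qabs {R : realType} (q : quat R) : R :=
  let: ((a, b), (c, e)) := q in Num.sqrt (a ^+ 2 + b ^+ 2 + c ^+ 2 + e ^+ 2).

Inductive scalar_kind := KReal | KComplex | KQuat.

Definition inK {R : realType} (k : scalar_kind) (q : quat R) : Prop :=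
  let: ((_, b), (c, e)) := q in
  match k with
  | KReal => b = 0 /\ c = 0 /\ e = 0
  | KComplex => c = 0 /\ e = 0
  | KQuat => True
  end.

Definition unitK {R : realType} (k : scalar_kind) : set (quat R) :=
  [set u | inK k u /\ qabs u = 1].

(* mu is the right-invariant Haar probability measure on U (viewed as a
   measure on the Borel sets of R^4 = H concentrated on U). *)
Definition haar_prob {R : realType} (k : scalar_kind)
    (mu : {measure set (quat R) -> \bar R}) : Prop :=
  [/\ mu setT = 1%E, mu (~` unitK k) = 0%E &
      forall (A : set (quat R)) (v : quat R), measurable A -> A `<=` unitK k ->
        unitK k v -> mu ((fun u => qmul u v) @` A) = mu A].

Section MVS.
Variables (R : realType) (k : scalar_kind) (E : zmodType).
Variable (smul : quat R -> E -> E) (d : E -> E -> R).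

Definition is_metric : Prop :=
  [/\ forall x y, 0 <= d x y,
      forall x y, d x y = 0 <-> x = y,
      forall x y, d x y = d y x &
      forall x y z, d x z <= d x y + d y z].

(* E is a (left) vector space over K with scalar multiplication smul
   (only scalars in K matter) *)
Definition is_K_vector_space : Prop :=
  [/\ forall x, smul qone x = x,
      forall l m x, inK k l -> inK k m -> smul (qmul l m) x = smul l (smul m x),
      forall l m x, inK k l -> inK k m -> smul (qadd l m) x = smul l x + smul m x &
      forall l x y, inK k l -> smul l (x + y) = smul l x + smul l y].

Definition is_tvs_for_d : Prop :=
  (forall x y (e : R), 0 < e -> exists2 r : R, 0 < r &
     forall x' y', d x x' < r -> d y y' < r -> d (x + y) (x' + y') < e) /\
  (forall l x (e : R), inK k l -> 0 < e -> exists2 r : R, 0 < r &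
     forall l' x', inK k l' -> qabs (qsub l l') < r -> d x x' < r ->
       d (smul l x) (smul l' x') < e).

Definition metric_vector_space : Prop :=
  [/\ is_metric, is_K_vector_space & is_tvs_for_d].

Definition translation_invariant (C0 : R) : Prop :=
  forall x y z, d (x + z) (y + z) <= d x y + C0.

Definition lipschitz_multiplicative (C1 C2 C3 : R) : Prop :=
  [/\ 1 <= C1, 0 <= C2, 0 <= C3 &
      forall l x y, inK k l ->
        C1^-1 * qabs l * d x y - C2 * qabs l - C3 <= d (smul l x) (smul l y) /\
        d (smul l x) (smul l y) <= C1 * qabs l * d x y + C2 * qabs l + C3].

Definition linear_subspace (F : set E) : Prop :=
  [/\ F 0, forall x y, F x -> F y -> F (x + y) &
      forall l x, inK k l -> F x -> F (smul l x)].

Definition d_bounded_on (F : set E) : Prop :=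
  exists M : R, forall x y, F x -> F y -> d x y <= M.

Definition maximal_bounded_subspace (E0 : set E) : Prop :=
  [/\ linear_subspace E0, d_bounded_on E0 &
      forall F, linear_subspace F -> d_bounded_on F -> F `<=` E0].

Variable mu : {measure set (quat R) -> \bar R}.

Definition d0 (x y : E) : R :=
  fine (\int[mu]_(u in unitK k) (d (smul u x) (smul u y))%:E)%E.

Definition delta0 (x y : E) : R :=
  lim ((fun n : nat => d0 (x *+ n) (y *+ n) / n%:R) @ \oo).

Definition qnorm (x : E) : R := delta0 x 0.

Definition hausdorff_classes (E0 : set E) (rho : E -> E -> R) (x0 y0 : E) : \bar R :=
  maxe
    (ereal_inf [set ereal_sup [set (rho x y)%:E | y in [set y0 + z | z in E0]]
                 | x in [set x0 + z | z in E0]])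
    (ereal_inf [set ereal_sup [set (rho x y)%:E | x in [set x0 + z | z in E0]]
                 | y in [set y0 + z | z in E0]]).

End MVS.

Definition lipschitz_equiv {R : realType} {T : Type}
    (A B : R) (rho : T -> T -> R) (sigma : T -> T -> \bar R) : Prop :=
  forall x y, ((A^-1)%:E * sigma x y - B%:E <= (rho x y)%:E)%E /\
              ((rho x y)%:E <= A%:E * sigma x y + B%:E)%E.

From HB Require Import structures.
From mathcomp Require Import all_boot all_order all_algebra.
From mathcomp Require Import all_classical all_reals all_analysis.
From mathcomp Require Import lra ring.
Import Order.TTheory GRing.Theory Num.Theory.
Import numFieldNormedType.Exports.
Set Implicit Arguments. Unset Strict Implicit. Unset Printing Implicit Defensive.
Local Open Scope classical_set_scope.
Local Open Scope ring_scope.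

(* Since d0 averages d over the unit sphere U, the lipschitz multiplicative
   bound at |u| = 1 makes d0 and d (C1, C2 + C3)-equivalent, and translation
   quasi-invariance makes n |-> d0(nx, ny) subadditive up to 2 C0, so by
   Fekete's lemma d0(nx, ny) / n converges to delta0(x, y).  The bound at the
   scalar n, divided by n, makes delta0 and d0 (C1, C2)-equivalent: C3 is
   swallowed by the normalisation.  delta0 is exactly translation invariant and,
   d being bounded on E0, unchanged by adding vectors of E0; hence
   delta0(x + z, y + z') = ||x - y|| for all representatives of the two classes.
   A Hausdorff distance between classes lies between the extreme values of the
   distance on representatives, which transfers both equivalences. *)

Section QuaternionMeasurability.
Variable R : realType.

Lemma qabs_qsub_lt (u v : quat R) (s : R) :
  `|u.1.1 - v.1.1| < s -> `|u.1.2 - v.1.2| < s ->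
  `|u.2.1 - v.2.1| < s -> `|u.2.2 - v.2.2| < s ->
  qabs (qsub u v) < s *+ 2.
Proof.
case: u => [[a b] [c e]]; case: v => [[a' b'] [c' e']] /=.
rewrite !ltr_norml => /andP[h1 h2] /andP[h3 h4] /andP[h5 h6] /andP[h7 h8].
have s0 : 0 < s by lra.
have -> : s *+ 2 = Num.sqrt ((s *+ 2) ^+ 2).
  by rewrite sqrtr_sqr ger0_norm // mulrn_wge0 // ltW.
rewrite ltr_sqrt; last by rewrite exprn_gt0 // mulrn_wgt0.
rewrite !expr2; nra.
Qed.

Definition rat_ball (q : rat) (m : nat) : set R :=
  `](ratr q - m.+1%:R^-1), (ratr q + m.+1%:R^-1)[%classic.

Lemma rat_ballP q m z : rat_ball q m z <-> `|z - ratr q| < m.+1%:R^-1.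
Proof. by rewrite /rat_ball /= in_itv /= ltr_distl. Qed.

Lemma exists_rat_ball (z : R) m : exists q, rat_ball q m z.
Proof.
set e : R := m.+1%:R^-1.
have e0 : 0 < e by rewrite invr_gt0.
have [q] := @rat_in_itvoo R (z - e) (z + e) ltac:(lra).
by rewrite in_itv /= => hq; exists q; apply/rat_ballP; rewrite distrC ltr_distl.
Qed.

Definition rat_box (c : (rat * rat) * (rat * rat)) (m : nat) : set (quat R) :=
  (rat_ball c.1.1 m `*` rat_ball c.1.2 m) `*` (rat_ball c.2.1 m `*` rat_ball c.2.2 m).

Lemma measurable_rat_box c m : measurable (rat_box c m).
Proof. by do 2 apply: measurableX; exact: measurable_itv. Qed.

Lemma rat_box_sub_qball (v : quat R) (r : R) : 0 < r ->
  exists c m, rat_box c m v /\ rat_box c m `<=` [set w | qabs (qsub v w) < r].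
Proof.
move=> r0; have [m hm] := ltr_add_invr (divr_gt0 r0 (ltr0n R 8)).
rewrite add0r in hm.
have [q11 h11] := exists_rat_ball v.1.1 m; have [q12 h12] := exists_rat_ball v.1.2 m.
have [q21 h21] := exists_rat_ball v.2.1 m; have [q22 h22] := exists_rat_ball v.2.2 m.
exists ((q11, q12), (q21, q22)), m; split; first by [].
have close (a b : R) q : rat_ball q m a -> rat_ball q m b -> `|a - b| < r / 4.
  move=> /rat_ballP ha /rat_ballP hb; set e := m.+1%:R^-1 in hm ha hb.
  by rewrite (le_lt_trans (ler_distD (ratr q) a b)) // !(distrC (ratr q)); lra.
move=> w [[/= g11 g12] [g21 g22]]; rewrite /=.
apply: (lt_le_trans (qabs_qsub_lt (close _ _ _ h11 g11) (close _ _ _ h12 g12)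
  (close _ _ _ h21 g21) (close _ _ _ h22 g22))); lra.
Qed.

(* The preimage of an open interval is the union of the countably many rational
   boxes it contains. *)
Lemma measurable_fun_qcontinuous (D : set (quat R)) (f : quat R -> R) :
  measurable D ->
  (forall u, D u -> forall e, 0 < e -> exists2 r, 0 < r &
     forall v, D v -> qabs (qsub u v) < r -> `|f v - f u| < e) ->
  measurable_fun D f.
Proof.
move=> mD cf; apply: (measurability _ (measurable_realfun.RGenOpens.measurableE R)).
move=> _ [_ [a [b ->]] <-]; set P := f @^-1` _.
pose B (i : (rat * rat) * (rat * rat) * nat) :=
  if `[< rat_box i.1 i.2 `&` D `<=` P >] then rat_box i.1 i.2 else set0.
suff -> : D `&` P = D `&` \bigcup_i B i.
  apply: measurableI => //; apply: countable_bigcupT_measurable.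
    exact: countableP.
  by move=> i; rewrite /B; case: asboolP => _ //; exact: measurable_rat_box.
apply/seteqP; split => v [Dv Pv]; split => //; last first.
  by case: Pv => i _; rewrite /B; case: asboolP => // sub Bv; exact: sub.
have /andP[av vb] : a < f v < b by rewrite /P /= in_itv in Pv.
set e := Num.min (f v - a) (b - f v).
have ea : e <= f v - a by rewrite ge_min lexx.
have eb : e <= b - f v by rewrite ge_min lexx orbT.
have [r r0 hr] := cf v Dv e ltac:(by rewrite lt_min !subr_gt0 av vb).
have [c [m [bv sub]]] := rat_box_sub_qball v r0.
exists (c, m) => //; rewrite /B; case: asboolP => //= -[] w [/sub /= vw Dw].
have := hr w Dw vw; rewrite ltr_distl => /andP[lo hi].
by rewrite /P /= in_itv /=; apply/andP; split; lra.
Qed.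

Lemma measurable_levelset (g : quat R -> R) (c : R) :
  measurable_fun setT g -> measurable [set u | g u = c].
Proof.
by move=> mg; rewrite -[X in measurable X]setTI; exact: mg _ (measurable_set1 c).
Qed.

Let m11 : measurable_fun setT (fun u : quat R => u.1.1).
Proof. exact: (measurableT_comp measurable_fst measurable_fst). Qed.
Let m12 : measurable_fun setT (fun u : quat R => u.1.2).
Proof. exact: (measurableT_comp measurable_snd measurable_fst). Qed.
Let m21 : measurable_fun setT (fun u : quat R => u.2.1).
Proof. exact: (measurableT_comp measurable_fst measurable_snd). Qed.
Let m22 : measurable_fun setT (fun u : quat R => u.2.2).
Proof. exact: (measurableT_comp measurable_snd measurable_snd). Qed.

Lemma measurable_qabs : measurable_fun setT (@qabs R).
Proof.
have -> : @qabs R = fun u => Num.sqrt (u.1.1 ^+ 2 + u.1.2 ^+ 2 + u.2.1 ^+ 2 + u.2.2 ^+ 2).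
  by apply: funext => -[[a b] [c e]].
apply: measurableT_comp (measurable_realfun.continuous_measurable_fun (@sqrt_continuous R)) _.
by repeat apply: measurable_realfun.measurable_funD; exact: measurable_realfun.measurable_funX.
Qed.

Lemma measurable_unitK k : measurable (unitK k : set (quat R)).
Proof.
have -> : (unitK k : set (quat R)) = [set u | qabs u = 1] `&`
  match k with
  | KReal => [set u | u.1.2 = 0] `&` [set u | u.2.1 = 0] `&` [set u | u.2.2 = 0]
  | KComplex => [set u | u.2.1 = 0] `&` [set u | u.2.2 = 0]
  | KQuat => setT
  end.
  apply/seteqP; split => -[[a b] [c e]]; rewrite /unitK /inK /=; case: k => /=;
    tauto.
apply: measurableI; first exact: measurable_levelset measurable_qabs.
case: k; last exact: measurableT.
- apply: measurableI; first apply: measurableI.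
  + exact: measurable_levelset m12.
  + exact: measurable_levelset m21.
  + exact: measurable_levelset m22.
- by apply: measurableI; [exact: measurable_levelset m21|exact: measurable_levelset m22].
Qed.

End QuaternionMeasurability.

Section ProbabilityIntegral.
Variables (disp : measure_display) (T : measurableType disp) (R : realType).
Variables (mu : {measure set T -> \bar R}) (U : set T).
Hypotheses (mU : measurable U) (muU : mu U = 1%E).

Local Notation integrable f := (mu.-integrable U (EFin \o f)).
Local Notation Rint f := (Rintegral mu U f).

Lemma integrable_bounded (f : T -> R) (M : R) : measurable_fun U f ->
  (forall u, U u -> `|f u| <= M) -> integrable f.
Proof.
move=> mf fM; apply: measurable_bounded_integrable => //; first by rewrite muU ltry.
by exists M; split=> [|N /ltW MN u /fM /le_trans]; [exact: num_real | apply].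
Qed.

Lemma integrable_cst (c : R) : integrable (fun _ => c).
Proof. by apply: (@integrable_bounded _ `|c|) => //; exact: measurable_cst. Qed.

Lemma Rintegral_cst1 (c : R) : Rint (fun _ => c) = c.
Proof. by rewrite Rintegral_cst // muU mulr1. Qed.

Lemma Rintegral_affine (a c : R) g : integrable g ->
  Rint (fun u => a * g u + c) = a * Rint g + c.
Proof.
move=> ig; rewrite RintegralD //.
- by rewrite RintegralZl // Rintegral_cst1.
- by apply: eq_integrable (integrableZl mU a ig) => // u _ /=; rewrite EFinM.
- exact: integrable_cst.
Qed.

Lemma integrable_affine (a c : R) g : integrable g ->
  integrable (fun u => a * g u + c).
Proof.
move=> ig; have := integrableD mU (integrableZl mU a ig) (integrable_cst c).
by apply: eq_integrable => // u _ /=; rewrite EFinD EFinM.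
Qed.

Lemma Rintegral_le_affine (a c : R) f g : integrable f -> integrable g ->
  (forall u, U u -> f u <= a * g u + c) -> Rint f <= a * Rint g + c.
Proof.
move=> i_f ig fg; rewrite -Rintegral_affine //.
by apply: le_Rintegral => //; exact: integrable_affine.
Qed.

Lemma Rintegral_ge_affine (a c : R) f g : integrable f -> integrable g ->
  (forall u, U u -> a * g u + c <= f u) -> a * Rint g + c <= Rint f.
Proof.
move=> i_f ig fg; rewrite -Rintegral_affine //.
by apply: le_Rintegral => //; exact: integrable_affine.
Qed.

Lemma Rintegral_le_cst (c : R) f : integrable f ->
  (forall u, U u -> f u <= c) -> Rint f <= c.
Proof.
move=> i_f fc; rewrite -[leRHS]Rintegral_cst1.
by apply: le_Rintegral => //; exact: integrable_cst.
Qed.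

Lemma Rintegral_ge_cst (c : R) f : integrable f ->
  (forall u, U u -> c <= f u) -> c <= Rint f.
Proof.
move=> i_f fc; rewrite -[leLHS]Rintegral_cst1.
by apply: le_Rintegral => //; exact: integrable_cst.
Qed.

Lemma Rintegral_le_add (c : R) f g h : integrable f -> integrable g -> integrable h ->
  (forall u, U u -> f u <= g u + h u + c) -> Rint f <= Rint g + Rint h + c.
Proof.
move=> i_f ig ih fgh; rewrite -addrA -[Rint h]mul1r -Rintegral_affine //.
rewrite -RintegralD //; last exact: integrable_affine.
apply: le_Rintegral => //.
  by apply: eq_integrable (integrableD mU ig (integrable_affine 1 c ih)) => // u _ /=.
by move=> u Uu; rewrite mul1r addrA; exact: fgh.
Qed.

End ProbabilityIntegral.

Section Fekete.
Variable R : realType.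

Lemma subadditive_le_mul (b : nat -> R) (m : nat) : (0 < m)%N ->
  (forall n, 0 <= b n) -> (forall p q, b (p + q)%N <= b p + b q) ->
  forall n, b n <= n%:R / m%:R * b m + \sum_(r < m) b r.
Proof.
move=> m0 b0 bD; elim/ltn_ind => n IH.
have [nm|mn] := ltnP n m.
  rewrite (bigD1 (Ordinal nm)) //= addrCA lerDl addr_ge0 ?sumr_ge0 //.
  by rewrite mulr_ge0 ?divr_ge0.
rewrite -(subnKC mn) (le_trans (bD _ _)) // addrC.
rewrite (le_trans (lerD (IH _ _) (lexx (b m)))) ?ltn_subrL ?m0 ?(leq_trans m0) //.
have m0' : m%:R != 0 :> R by rewrite pnatr_eq0 -lt0n.
by rewrite natrD !mulrDl divff // mul1r; lra.
Qed.

Lemma fekete (a : nat -> R) (c : R) : 0 <= c -> (forall n, 0 <= a n) ->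
  (forall p q, a (p + q)%N <= a p + a q + c) -> cvgn (fun n => a n / n%:R).
Proof.
move=> c0 a0 aD; pose b n := a n + c.
have b0 n : 0 <= b n by rewrite addr_ge0.
have bD p q : b (p + q)%N <= b p + b q by rewrite /b; move: (aD p q); lra.
pose S := [set b n / n%:R | n in [set n | (0 < n)%N]].
have hS : has_inf S.
  split; first by exists (b 1%N / 1%:R), 1%N.
  by exists 0 => _ [n _ <-]; rewrite divr_ge0.
apply/cvg_ex; exists (inf S); apply/cvgrPdist_lt => e e0.
have e2 : 0 < e / 2 by rewrite divr_gt0.
have [_ [m m0 <-] bm] := inf_adherent e2 hS.
set K := \sum_(r < m) b r.
near=> n; rewrite /=.
have n0 : (0 < n)%N by near: n; exact: nbhs_infty_ge.
have n_gt0 : 0 < n%:R :> R by rewrite ltr0n.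
have Kc : (K + c) / (e / 2) < n%:R by near: n; exact: nbhs_infty_gtr.
have Sn : inf S <= b n / n%:R by apply: (ge_inf (proj2 hS)); exists n.
have bn : b n / n%:R <= b m / m%:R + K / n%:R.
  have m0' : m%:R != 0 :> R by rewrite pnatr_eq0 -lt0n.
  rewrite ler_pdivrMr // (_ : _ * n%:R = n%:R / m%:R * b m + K).
    exact: subadditive_le_mul.
  by field; rewrite m0' gt_eqF.
have small : K / n%:R + c / n%:R < e / 2.
  by rewrite -mulrDl ltr_pdivrMr // mulrC -ltr_pdivrMr.
have K0 : 0 <= K / n%:R by rewrite divr_ge0 ?sumr_ge0 ?ltW.
have cn0 : 0 <= c / n%:R by rewrite divr_ge0 // ltW.
have -> : a n / n%:R = b n / n%:R - c / n%:R by rewrite /b mulrDl addrK.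
by rewrite ltr_distl; apply/andP; split; lra.
Unshelve. all: by end_near.
Qed.

End Fekete.

Lemma ler_cvgn_up_to_invn (R : realType) (u v : nat -> R) (l l' C : R) :
  u @ \oo --> l -> v @ \oo --> l' ->
  (forall n, (0 < n)%N -> u n <= v n + C / n%:R) -> l <= l'.
Proof.
move=> ul vl uv; apply/ler_addgt0Pr => e e0.
apply: (ler_cvg_to ul (cvgD vl (cvg_cst e))); near=> n.
have n0 : (0 < n)%N by near: n; exact: nbhs_infty_ge.
have Cn : C / e <= n%:R by near: n; exact: nbhs_infty_ger.
apply: (le_trans (uv n n0)); rewrite lerD2l ler_pdivrMr ?ltr0n //.
by rewrite mulrC -ler_pdivrMr.
Unshelve. all: by end_near.
Qed.

Section LipschitzClose.
Variable R : realType.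

Definition lipschitz_close (A B r s : R) := A^-1 * s - B <= r /\ r <= A * s + B.

Lemma lipschitz_closeE (A B r s : R) : 0 < A ->
  lipschitz_close A B r s <-> (r - B) / A <= s <= A * (r + B).
Proof.
move=> A0; rewrite /lipschitz_close lerBlDr ler_pdivrMl // ler_pdivrMr //.
by rewrite [s * A]mulrC -lerBlDr; split=> [[-> ->] | /andP[]].
Qed.

Lemma lipschitz_close_weaken (A B B' r s : R) :
  B <= B' -> lipschitz_close A B r s -> lipschitz_close A B' r s.
Proof. by move=> BB' [lo hi]; split; lra. Qed.

Lemma lipschitz_close_trans (A A' B B' r s t : R) :
  1 <= A -> 0 < A' -> 0 <= B' -> lipschitz_close A B r s -> lipschitz_close A' B' s t ->
  lipschitz_close (A * A') (A * B' + B) r t.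
Proof.
move=> A1 A'0 B'0 [lo hi] [lo' hi'].
have A0 : 0 < A by exact: lt_le_trans ltr01 A1.
split.
- have AB' : A^-1 * B' <= A * B'.
    by rewrite ler_wpM2r // (le_trans _ A1) // invf_le1.
  have As : A^-1 * (A'^-1 * t - B') <= A^-1 * s by rewrite ler_pM2l ?invr_gt0.
  by rewrite invfM -mulrA; rewrite mulrBr in As; lra.
- have As : A * s <= A * A' * t + A * B' by rewrite -mulrA -mulrDr ler_pM2l.
  lra.
Qed.

Lemma ereal_sup_image_bounds (I : Type) (A : set I) (g : I -> \bar R) (lo hi : \bar R) :
  A !=set0 -> (forall i, A i -> (lo <= g i <= hi)%E) ->
  (lo <= ereal_sup (g @` A) <= hi)%E.
Proof.
move=> [i Ai] gA; apply/andP; split.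
- by apply: le_ereal_sup_tmp; exists (g i); [exists i | case/andP: (gA i Ai)].
- by apply: ge_ereal_sup => _ [j Aj <-]; case/andP: (gA j Aj).
Qed.

Lemma ereal_inf_image_bounds (I : Type) (A : set I) (g : I -> \bar R) (lo hi : \bar R) :
  A !=set0 -> (forall i, A i -> (lo <= g i <= hi)%E) ->
  (lo <= ereal_inf (g @` A) <= hi)%E.
Proof.
move=> [i Ai] gA; apply/andP; split.
- by apply: le_ereal_inf_tmp => _ [j Aj <-]; case/andP: (gA j Aj).
- by apply: ge_ereal_inf; exists (g i); [exists i | case/andP: (gA i Ai)].
Qed.

Lemma hausdorff_classes_bounds (T : zmodType) (E0 : set T) (rho : T -> T -> R)
    (x0 y0 : T) (lo hi : R) : E0 0 ->
  (forall z z', E0 z -> E0 z' -> lo <= rho (x0 + z) (y0 + z') <= hi) ->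
  (lo%:E <= hausdorff_classes E0 rho x0 y0 <= hi%:E)%E.
Proof.
move=> E00 H; have class0 t : [set (t + z)%R | z in E0] !=set0 by exists (t + 0), 0.
have inner x y : [set (x0 + z)%R | z in E0] x -> [set (y0 + z)%R | z in E0] y ->
    (lo%:E <= (rho x y)%:E <= hi%:E)%E.
  by move=> [z Ez <-] [z' Ez' <-]; rewrite !lee_fin; exact: H.
have /andP[lo1 hi1] := ereal_inf_image_bounds (class0 x0) (fun x Xx =>
  ereal_sup_image_bounds (class0 y0) (fun y Yy => inner x y Xx Yy)).
have /andP[lo2 hi2] := ereal_inf_image_bounds (class0 y0) (fun y Yy =>
  ereal_sup_image_bounds (class0 x0) (fun x Xx => inner x y Xx Yy)).
by rewrite /hausdorff_classes le_max ge_max lo1 hi1 hi2.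
Qed.

Lemma hausdorff_classes_lipschitz (T : zmodType) (E0 : set T) (rho : T -> T -> R)
    (A B r : R) (x0 y0 : T) : 0 < A -> E0 0 ->
  (forall z z', E0 z -> E0 z' -> lipschitz_close A B r (rho (x0 + z) (y0 + z'))) ->
  ((A^-1)%:E * hausdorff_classes E0 rho x0 y0 - B%:E <= r%:E)%E /\
  (r%:E <= A%:E * hausdorff_classes E0 rho x0 y0 + B%:E)%E.
Proof.
move=> A0 E00 close.
have := @hausdorff_classes_bounds _ E0 rho x0 y0 _ _ E00
  (fun z z' hz hz' => proj1 (lipschitz_closeE _ _ _ A0) (close z z' hz hz')).
case: hausdorff_classes => [h||] /andP[lo hi]; last by rewrite leeNy_eq in lo.
  have [lo' hi'] : lipschitz_close A B r h.
    by apply/lipschitz_closeE => //; rewrite -!lee_fin lo hi.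
  by rewrite -EFinM -EFinB -EFinM -EFinD !lee_fin; split.
by rewrite leye_eq in hi.
Qed.

End LipschitzClose.

Section MetricVectorSpace.
Variables (R : realType) (k : scalar_kind) (E : zmodType).
Variables (smul : quat R -> E -> E) (d : E -> E -> R) (C0 C1 C2 C3 : R).
Variables (mu : {measure set (quat R) -> \bar R}) (E0 : set E).
Hypotheses (Hmvs : metric_vector_space k smul d) (Hti : translation_invariant d C0).
Hypotheses (Hlm : lipschitz_multiplicative k smul d C1 C2 C3) (Hmu : haar_prob k mu).
Hypothesis HE0 : maximal_bounded_subspace k smul d E0.

Local Notation U := (unitK k : set (quat R)).
Local Notation D0 := (d0 k smul d mu).
Local Notation delta := (delta0 k smul d mu).

Lemma d_ge0 x y : 0 <= d x y. Proof. by case: Hmvs => [[]]. Qed.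
Lemma d_xx x : d x x = 0. Proof. by case: Hmvs => [[_ /(_ x x) [_ ->]]]. Qed.
Lemma d_sym x y : d x y = d y x. Proof. by case: Hmvs => [[]]. Qed.
Lemma d_triangle x y z : d x z <= d x y + d y z. Proof. by case: Hmvs => [[]]. Qed.

Lemma smul_one x : smul qone x = x. Proof. by have [_ [h _ _ _] _] := Hmvs; apply: h. Qed.
Lemma smul_addl l m x : inK k l -> inK k m -> smul (qadd l m) x = smul l x + smul m x.
Proof. by have [_ [_ _ h _] _] := Hmvs; apply: h. Qed.
Lemma smul_addr l x y : inK k l -> smul l (x + y) = smul l x + smul l y.
Proof. by have [_ [_ _ _ h] _] := Hmvs; apply: h. Qed.

Lemma C0_ge0 : 0 <= C0.
Proof. by have := Hti 0 0 0; rewrite addr0 d_xx add0r. Qed.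
Lemma C1_ge1 : 1 <= C1. Proof. by case: Hlm. Qed.
Lemma C1_gt0 : 0 < C1. Proof. exact: lt_le_trans ltr01 C1_ge1. Qed.
Lemma C2_ge0 : 0 <= C2. Proof. by case: Hlm. Qed.
Lemma C3_ge0 : 0 <= C3. Proof. by case: Hlm. Qed.

Lemma d_translate_ge x y z : d x y <= d (x + z) (y + z) + C0.
Proof. by have := Hti (x + z) (y + z) (- z); rewrite !addrK. Qed.

Lemma d_addD a b a' b' : d (a + b) (a' + b') <= d a a' + d b b' + C0 *+ 2.
Proof.
have := d_triangle (a + b) (a' + b) (a' + b').
have := Hti a a' b; have := Hti b b' a'; rewrite [b + a']addrC [b' + a']addrC.
by rewrite mulr2n; lra.
Qed.

Lemma d_addl_le a b c : d (a + b) c <= d a c + (d b 0 + C0).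
Proof.
have := d_triangle (a + b) a c; have := Hti b 0 a.
by rewrite add0r addrC; lra.
Qed.

Lemma d_addl_ge a b c : d a c <= d (a + b) c + (d b 0 + C0).
Proof.
have := d_triangle a (a + b) c; have := Hti 0 b a.
by rewrite add0r addrC d_sym [d 0 b]d_sym; lra.
Qed.

Lemma d_dist_le a b a' b' : `|d a' b' - d a b| <= d a a' + d b b'.
Proof.
have := d_triangle a' a b'; have := d_triangle a b b'.
have := d_triangle a a' b; have := d_triangle a' b' b.
by rewrite ler_norml [d a' a]d_sym [d b' b]d_sym; lra.
Qed.

Definition qnat (n : nat) : quat R := ((n%:R, 0), (0, 0)).

Lemma inK_qnat n : inK k (qnat n). Proof. by case: k. Qed.

Lemma qabs_qnat n : qabs (qnat n) = n%:R.
Proof. by rewrite /qabs /= !expr2 !mul0r !addr0 -expr2 sqrtr_sqr ger0_norm. Qed.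

Lemma smul_qnat x n : smul (qnat n) x = x *+ n.
Proof.
have qnatS m : qnat m.+1 = qadd (qnat m) qone by rewrite /qnat /qadd /= !addr0 natr1.
elim: n => [|n IH]; last first.
  rewrite qnatS smul_addl; [by rewrite IH smul_one mulrSr | exact: inK_qnat | by case: k].
have := smul_addl x (inK_qnat 0) (inK_qnat 0); rewrite /qadd /= !addr0 => h.
by rewrite mulr0n; apply: (addrI (smul (qnat 0) x)); rewrite addr0 -h.
Qed.

Lemma smul0r u : inK k u -> smul u 0 = 0.
Proof. by move=> ku; apply: (addrI (smul u 0)); rewrite addr0 -smul_addr // addr0. Qed.

Lemma smul_mulrn u x n : inK k u -> smul u (x *+ n) = smul u x *+ n.
Proof.
move=> ku; elim: n => [|n IH]; first by rewrite !mulr0n smul0r.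
by rewrite !mulrSr smul_addr // IH.
Qed.

Lemma lipschitz_unit u x y : U u ->
  lipschitz_close C1 (C2 + C3) (d (smul u x) (smul u y)) (d x y).
Proof.
case=> ku u1; case: Hlm => _ _ _ /(_ u x y ku) [lo hi].
by rewrite u1 !mulr1 in lo hi; split; lra.
Qed.

Lemma lipschitz_mulrn n x y :
  C1^-1 * n%:R * d x y - C2 * n%:R - C3 <= d (x *+ n) (y *+ n) <=
  C1 * n%:R * d x y + C2 * n%:R + C3.
Proof.
by case: Hlm => _ _ _ /(_ _ x y (inK_qnat n)) [lo hi]; rewrite -!smul_qnat -qabs_qnat lo hi.
Qed.

Local Notation dU x y := (fun u => d (smul u x) (smul u y)).

Let mU : measurable U. Proof. exact: measurable_unitK. Qed.

Lemma mu_unitK : mu U = 1%E.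
Proof.
case: Hmu => muT muC _.
have : mu [set: quat R] = (mu U + mu (~` U))%E.
  by rewrite -(setUv U); exact: (measureU mu mU (measurableC mU) (setICr U)).
by rewrite muT muC adde0.
Qed.

Lemma dU_qcontinuous x y u : U u -> forall e, 0 < e -> exists2 r, 0 < r &
  forall v, U v -> qabs (qsub u v) < r -> `|dU x y v - dU x y u| < e.
Proof.
move=> [ku _] e e0; have [_ _ [_ smul_cont]] := Hmvs.
have e2 : 0 < e / 2 by rewrite divr_gt0.
have [rx rx0 hx] := smul_cont u x _ ku e2.
have [ry ry0 hy] := smul_cont u y _ ku e2.
exists (Num.min rx ry); first by rewrite lt_min rx0 ry0.
move=> v [kv _]; rewrite lt_min => /andP[vx vy].
have := hx v x kv vx; have := hy v y kv vy; rewrite !d_xx => /(_ ry0) dy /(_ rx0) dx.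
by rewrite (le_lt_trans (d_dist_le _ _ _ _)) //; lra.
Qed.

Lemma integrable_dU x y : mu.-integrable U (EFin \o dU x y).
Proof.
apply: (integrable_bounded mU mu_unitK (M := C1 * d x y + (C2 + C3))).
  exact: measurable_fun_qcontinuous (@dU_qcontinuous x y).
by move=> u /(lipschitz_unit x y) [_ hi]; rewrite ger0_norm ?d_ge0.
Qed.

Local Hint Resolve mu_unitK integrable_dU : core.

Lemma d0_ge0 x y : 0 <= D0 x y.
Proof. by apply: Rintegral_ge0 => u _; exact: d_ge0. Qed.

Lemma d0_sym x y : D0 x y = D0 y x.
Proof. by apply: eq_Rintegral => u _; exact: d_sym. Qed.

Lemma d0_close_d x y : lipschitz_close C1 (C2 + C3) (D0 x y) (d x y).
Proof.
by split; [apply: Rintegral_ge_cst | apply: Rintegral_le_cst] => // u /(lipschitz_unit x y) [].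
Qed.

Lemma d0_mulrn_le x y n :
  D0 (x *+ n) (y *+ n) <= C1 * n%:R * D0 x y + (C2 * n%:R + C3).
Proof.
apply: Rintegral_le_affine => //.
move=> u [ku _]; rewrite !smul_mulrn // addrA.
by case/andP: (lipschitz_mulrn n (smul u x) (smul u y)).
Qed.

Lemma d0_mulrn_ge x y n :
  C1^-1 * n%:R * D0 x y - (C2 * n%:R + C3) <= D0 (x *+ n) (y *+ n).
Proof.
apply: Rintegral_ge_affine => //.
move=> u [ku _]; rewrite !smul_mulrn // opprD addrA.
by case/andP: (lipschitz_mulrn n (smul u x) (smul u y)).
Qed.

Lemma d0_mulrn_subadditive x y p q :
  D0 (x *+ (p + q)) (y *+ (p + q)) <=
  D0 (x *+ p) (y *+ p) + D0 (x *+ q) (y *+ q) + C0 *+ 2.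
Proof.
apply: Rintegral_le_add => //.
by move=> u [ku _]; rewrite !mulrnDr !smul_addr //; exact: d_addD.
Qed.

Lemma delta0_cvg x y :
  (fun n => D0 (x *+ n) (y *+ n) / n%:R) @ \oo --> delta x y.
Proof.
apply: fekete (mulrn_wge0 2 C0_ge0) _ _ => [n|p q]; first exact: d0_ge0.
exact: d0_mulrn_subadditive.
Qed.

Lemma delta0_close_d0 x y : lipschitz_close C1 C2 (delta x y) (D0 x y).
Proof.
have pos n : (0 < n)%N -> 0 < n%:R :> R by rewrite ltr0n.
split.
- apply: (ler_cvgn_up_to_invn (C := C3) (cvg_cst _) (@delta0_cvg x y)) => n /pos n_gt0.
  rewrite -mulrDl ler_pdivlMr //.
  by have := d0_mulrn_ge x y n; lra.
- apply: (ler_cvgn_up_to_invn (C := C3) (@delta0_cvg x y) (cvg_cst _)) => n /pos n_gt0.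
  rewrite ler_pdivrMr // !mulrDl divfK ?gt_eqF //.
  by have := d0_mulrn_le x y n; lra.
Qed.

Lemma delta0_le_pointwise x y x' y' K :
  (forall n u, U u -> d (smul u (x' *+ n)) (smul u (y' *+ n)) <=
                      d (smul u (x *+ n)) (smul u (y *+ n)) + K) ->
  delta x' y' <= delta x y.
Proof.
move=> H; apply: (ler_cvgn_up_to_invn (C := K) (@delta0_cvg x' y') (@delta0_cvg x y)).
move=> n n0; rewrite -mulrDl ler_pM2r ?invr_gt0 ?ltr0n //.
rewrite -[D0 (x *+ n) _]mul1r; apply: Rintegral_le_affine => // u Uu.
by rewrite mul1r; exact: H.
Qed.

Lemma delta0_translate x y w : delta (x + w) (y + w) = delta x y.
Proof.
apply/le_anti/andP; split; apply: (delta0_le_pointwise (K := C0)) => n u [ku _];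
  rewrite !mulrnDl !(smul_addr _ _ ku).
- exact: Hti.
- exact: d_translate_ge.
Qed.

Lemma delta0_sym x y : delta x y = delta y x.
Proof. by rewrite /delta0; congr (lim (_ @ \oo)); apply: funext => n; rewrite d0_sym. Qed.

Lemma E0_0 : E0 0. Proof. by case: HE0 => [[]]. Qed.

Lemma E0_smul_mulrn u e n : inK k u -> E0 e -> E0 (smul u (e *+ n)).
Proof.
have [[E00 E0D E0Z] _ _] := HE0; move=> ku Ee; apply: E0Z => //.
by elim: n => [|n IH]; rewrite ?mulr0n ?mulrSr //; exact: E0D.
Qed.

Lemma delta0_addE0 x y e : E0 e -> delta (x + e) y = delta x y.
Proof.
move=> Ee; have [_ [M EM] _] := HE0.
have bound u n : inK k u -> d (smul u (e *+ n)) 0 <= M.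
  by move=> ku; apply: EM; [exact: E0_smul_mulrn | exact: E0_0].
apply/le_anti/andP; split; apply: (delta0_le_pointwise (K := M + C0)) => n u [ku _];
  rewrite mulrnDl (smul_addr _ _ ku).
- by apply: le_trans (d_addl_le _ _ _) _; rewrite lerD2l lerD2r bound.
- by apply: le_trans (d_addl_ge _ (smul u (e *+ n)) _) _; rewrite lerD2l lerD2r bound.
Qed.

Lemma delta0_classes x y z z' : E0 z -> E0 z' ->
  delta (x + z) (y + z') = qnorm k smul d mu (x - y).
Proof.
move=> Ez Ez'; rewrite delta0_addE0 // delta0_sym delta0_addE0 // delta0_sym.
by rewrite /qnorm -(delta0_translate (x - y) 0 y) subrK add0r.
Qed.

Lemma qnorm_close_d0 x y z z' : E0 z -> E0 z' ->
  lipschitz_close C1 C2 (qnorm k smul d mu (x - y)) (D0 (x + z) (y + z')).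
Proof. by move=> Ez Ez'; rewrite -(delta0_classes x y Ez Ez'); exact: delta0_close_d0. Qed.

Lemma qnorm_close_d x y z z' : E0 z -> E0 z' ->
  lipschitz_close (C1 * C1) (C1 * (C2 + C3) + C2)
    (qnorm k smul d mu (x - y)) (d (x + z) (y + z')).
Proof.
move=> Ez Ez'; apply: lipschitz_close_trans (qnorm_close_d0 x y Ez Ez') (d0_close_d _ _).
- exact: C1_ge1.
- exact: C1_gt0.
- by rewrite addr_ge0 ?C2_ge0 ?C3_ge0.
Qed.

End MetricVectorSpace.

Theorem proposition7 (R : realType) (k : scalar_kind) (E : zmodType)
    (smul : quat R -> E -> E) (d : E -> E -> R)
    (C0 C1 C2 C3 : R) (mu : {measure set (quat R) -> \bar R}) (E0 : set E) :
  metric_vector_space k smul d ->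
  translation_invariant d C0 ->
  lipschitz_multiplicative k smul d C1 C2 C3 ->
  haar_prob k mu ->
  maximal_bounded_subspace k smul d E0 ->
  lipschitz_equiv C1 (C2 + C3)
    (fun x y => qnorm k smul d mu (x - y))
    (hausdorff_classes E0 (d0 k smul d mu)) /\
  lipschitz_equiv (C1 ^+ 2) (C1 * C2 + C1 * C3 + C2)
    (fun x y => qnorm k smul d mu (x - y))
    (hausdorff_classes E0 d).
Proof.
move=> Hmvs Hti Hlm Hmu HE0; have C1_gt0 := C1_gt0 Hlm.
split=> x y; apply: hausdorff_classes_lipschitz (E0_0 HE0) _ => [|z z' Ez Ez'].
- exact: C1_gt0.
- apply: lipschitz_close_weaken (qnorm_close_d0 Hmvs Hti Hlm Hmu HE0 x y Ez Ez').
  by rewrite lerDl (C3_ge0 Hlm).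
- exact: exprn_gt0.
- by rewrite expr2 -mulrDr; apply: (qnorm_close_d Hmvs Hti Hlm Hmu HE0).
Qed.
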